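(* (1) If $\rho,\sigma\in S_n$ are disjoint (no index is moved by both), then $X^\rho_{\vec1}\otimes X^\sigma_{\vec1}=X^\sigma_{\vec1}\otimes X^\rho_{\vec1}=X^{\rho\sigma}_{\vec1}$. (2) Every bare defect $X^\sigma_{\vec1}$ can be written as a product of bare transposition defects: there are transpositions $\tau_1,\dots,\tau_m$ with $\sigma=\tau_1\cdots\tau_m$ and $X^\sigma_{\vec1}=X^{\tau_1}_{\vec1}\otimes(X^{\tau_2}_{\vec1}\otimes(\cdots\otimes X^{\tau_m}_{\vec1}))$.
   Context: Let $\mathcal{C}$ be a modular tensor category, $\mathrm{Irr}(\mathcal{C})$ its finite set of isomorphism classes of simple objects (containing $1$), $a\mapsto a^*$ duality, $C$ its fusion ring (free $\mathbb{Z}$-module on $\mathrm{Irr}(\mathcal{C})$, product $a\otimes b=\sum_cN_{ab}^cc$). Fix $n\ge2$. $C^{\boxtimes n}=C^{\otimes_{\mathbb{Z}}n}$ has basis the multilayer anyons $\vec a=a_1\boxtimes\cdots\boxtimes a_n$, layerwise product, unit $\vec1$; permutations compose right to left. For $\sigma\in S_n$ with orbits $\mathcal{O}(\sigma)$ (cycles incl. fixed points), $\vec a$ is $\sigma$-fixed iff constant on orbits. $C_\sigma$: free $\mathbb{Z}$-module on symbols $X^\sigma_{\vec a}$ ($\vec a$ $\sigma$-fixed), identified with $R_\sigma=\bigotimes_{O\in\mathcal{O}(\sigma)}C$; $X^\sigma_r$ for $r\in R_\sigma$; $X^\sigma_{\vec1}$ is the bare $\sigma$-defect; $C_{\mathrm{id}}=C^{\boxtimes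 n}$. Confinement $c_\sigma:C^{\boxtimes n}\to R_\sigma$, linear, $c_\sigma(\vec a)=\bigotimes_O(\bigotimes_{k\in O}a_k)$. Anyon–defect fusion $\vec a\otimes X^\sigma_{\vec b}=X^\sigma_{\vec b}\otimes\vec a:=X^\sigma_{c_\sigma(\vec a)\cdot\vec b}$. A $\sigma$-deconfinement $d_\sigma(\vec b)$: any $d\in C^{\boxtimes n}$ with nonnegative coefficients and $d\otimes X^\sigma_{\vec1}=X^\sigma_{\vec b}$. For $t=(ij)$, $\Omega_t=\sum_c\vec e_c$ ($c$ in layer $i$, $c^*$ in layer $j$, $1$ elsewhere). Following the paper's algorithm, $F(\rho,\sigma)$: write $\rho=t_1\cdots t_m$ with each disjoint cycle $(i_1\cdots i_l)$ written as $(i_1i_2)\cdots(i_{l-1}i_l)$; $\pi_{m+1}=\sigma$, $\pi_k=t_k\pi_{k+1}$; $F=\prod\Omega_{t_k}$ over $k$ with both indices of $t_k$ in a common cycle of $\pi_{k+1}$. Defect fusion is bilinear with $X^\rho_{\vec a}\otimes X^\sigma_{\vec b}:=(d_\rho(\vec a)\otimes d_\sigma(\vec b)\otimes F(\rho,\sigma))\otimes X^{\rho\sigma}_{\vec1}$. *)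

From HB Require Import structures.
From mathcomp Require Import all_boot all_order all_algebra all_fingroup.
Set Implicit Arguments.
Unset Strict Implicit.
Unset Printing Implicit Defensive.
Import GRing.Theory Num.Theory.
Local Open Scope ring_scope.

(* Fusion rules of the modular tensor category C: the finite set Irr(C) of
   simple labels, the unit 1, duality a |-> a^*, and fusion coefficients
   N a b c = N_{ab}^c. *)
Record fusion_rules := FusionRules {
  lab : finType;
  lunit : lab;
  ldual : lab -> lab;
  Nf : lab -> lab -> lab -> nat }.

(* Axioms satisfied by the fusion ring of a modular tensor category
   (commutative since C is braided, associative, unital, duality involutive,
   N_{ab}^1 = [b = a^*], Frobenius reciprocity). *)
Definition fusion_ring_axioms (F : fusion_rules) : Prop :=
  let N := @Nf F in let one := lunit F in let du := @ldual F in
  (forall a b c, N a b c = N b a c) /\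
  (forall a b c d, (\sum_e N a b e * N e c d)%N = (\sum_e N b c e * N a e d)%N) /\
  (forall a b, N one a b = (a == b) :> nat) /\
  (forall a, du (du a) = a) /\
  (forall a b, N a b one = (b == du a) :> nat) /\
  (forall a b c, N a b c = N (du a) c b).

Section Defs.
Variables (F : fusion_rules) (n : nat).
Local Notation L := (lab F).
Local Notation N := (@Nf F).
Local Notation one := (lunit F).

(* The fusion ring C = free Z-module on Irr(C). *)
Definition celt := {ffun L -> int}.
Definition cbasis (a : L) : celt := [ffun c : L => (c == a)%:R].
Definition cmul (x y : celt) : celt :=
  [ffun c : L => \sum_(a : L) \sum_(b : L) x a * y b * (N a b c)%:R].
Definition cunit : celt := cbasis one.
Definition cprod (s : seq L) : celt := foldr (fun a x => cmul (cbasis a) x) cunit s.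

(* C^{boxtimes n}: free Z-module on multilayer anyons a_1 ⊠ ... ⊠ a_n *)
Definition mvec := {ffun 'I_n -> L}.
Definition melt := {ffun mvec -> int}.
Definition mbasis (v : mvec) : melt := [ffun w : mvec => (w == v)%:R].
Definition vone : mvec := [ffun => one].
Definition munit : melt := mbasis vone.
Definition mmul (x y : melt) : melt :=
  [ffun w : mvec => \sum_(u : mvec) \sum_(v : mvec) x u * y v * \prod_k (N (u k) (v k) (w k))%:R].

(* Paper composition (right to left): rlcomp r s = r ∘ s.
   (In MathComp, (s * r)%g x = r (s x).) *)
Definition rlcomp (r s : {perm 'I_n}) : {perm 'I_n} := (s * r)%g.

Definition sfixed (s : {perm 'I_n}) (v : mvec) : bool := [forall k, v (s k) == v k].
Definition orbit_rep (s : {perm 'I_n}) (i : 'I_n) : bool :=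
  [forall j in porbit s i, (i <= j)%N].

(* R_sigma = ⊗_{O} C, realised as the free Z-module on sigma-fixed vectors
   (supported on sigma-fixed vectors); orbitwise product. *)
Definition rmul (s : {perm 'I_n}) (x y : melt) : melt :=
  [ffun w : mvec => (sfixed s w)%:R *
     \sum_(u : mvec) \sum_(v : mvec) x u * y v * \prod_(i | orbit_rep s i) (N (u i) (v i) (w i))%:R].

Definition conf_basis (s : {perm 'I_n}) (v : mvec) : melt :=
  [ffun w : mvec => (sfixed s w)%:R *
     \prod_(i | orbit_rep s i) cprod [seq v k | k <- enum (porbit s i)] (w i)].
Definition confine (s : {perm 'I_n}) (x : melt) : melt :=
  [ffun w : mvec => \sum_(v : mvec) x v * conf_basis s v w].

(* anyon-defect fusion: x ⊗ X^s_r = X^s_{c_s(x) . r} *)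
Definition act (s : {perm 'I_n}) (x r : melt) : melt := rmul s (confine s x) r.

Definition is_deconf (s : {perm 'I_n}) (r d : melt) : Prop :=
  (forall v, 0 <= d v) /\ act s d munit = r.

Definition omvec (i j : 'I_n) (c : L) : mvec :=
  [ffun k => if k == i then c else if k == j then @ldual F c else one].
Definition Omega (i j : 'I_n) : melt := [ffun w : mvec => \sum_(c : L) (w == omvec i j c)%:R].

(* F(rho, sigma) for a given decomposition ts = [t_1; ...; t_m] of rho *)
Definition Fstep (t : 'I_n * 'I_n) (acc : {perm 'I_n} * melt) :=
  (rlcomp (tperm t.1 t.2) acc.1,
   if t.2 \in porbit acc.1 t.1 then mmul (Omega t.1 t.2) acc.2 else acc.2).
Definition Ffac (ts : seq ('I_n * 'I_n)) (s : {perm 'I_n}) : melt :=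
  (foldr Fstep (s, munit) ts).2.

(* the cycle (i, r i, ..., r^{l-1} i) written as (i1 i2)(i2 i3)...(i_{l-1} i_l) *)
Definition chain (r : {perm 'I_n}) (i : 'I_n) : seq ('I_n * 'I_n) :=
  [seq (iter k r i, iter k.+1 r i) | k <- iota 0 (#|porbit r i|).-1].
(* ts is a decomposition of r as prescribed by the algorithm (any order of
   the disjoint cycles, any starting point in each cycle) *)
Definition cycle_decomp (r : {perm 'I_n}) (ts : seq ('I_n * 'I_n)) : Prop :=
  exists st : seq 'I_n,
    perm_eq [seq porbit r i | i <- st] [seq O <- enum (porbits r) | (1 < #|pred_of_set O|)%N]
    /\ ts = flatten [seq chain r i | i <- st].

(* defects X^s_r, r in R_s *)
Definition defect := ({perm 'I_n} * melt)%type.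
Definition bare (s : {perm 'I_n}) : defect := (s, munit).

(* z is a value of X^{x.1}_{x.2} ⊗ X^{y.1}_{y.2} for some admissible choice of
   deconfinements and of the decomposition used for F *)
Definition is_fusion (x y z : defect) : Prop :=
  exists dx dy ts,
    is_deconf x.1 x.2 dx /\ is_deconf y.1 y.2 dy /\ cycle_decomp x.1 ts /\
    z = (rlcomp x.1 y.1,
         act (rlcomp x.1 y.1) (mmul (mmul dx dy) (Ffac ts y.1)) munit).

(* x ⊗ y = w: the fusion is defined and every admissible choice gives w *)
Definition fuses_to (x y w : defect) : Prop :=
  (exists z, is_fusion x y z) /\ (forall z, is_fusion x y z -> z = w).

Definition is_transposition (t : {perm 'I_n}) : Prop :=
  exists i j : 'I_n, i != j /\ t = tperm i j.

(* w = X^{t1}_1 ⊗ (X^{t2}_1 ⊗ (... ⊗ X^{tm}_1)); empty product = vacuum *)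
Fixpoint nested (ts : seq {perm 'I_n}) (w : defect) : Prop :=
  match ts with
  | [::] => w = bare 1%g
  | [:: t] => w = bare t
  | t :: ts' => exists w', nested ts' w' /\ fuses_to (bare t) w' w
  end.

Definition perm_seqprod (ts : seq {perm 'I_n}) : {perm 'I_n} := foldr rlcomp 1%g ts.

Definition disjoint_perms (r s : {perm 'I_n}) : Prop := forall i, r i = i \/ s i = i.

End Defs.

From Pilot Require Import Defs.
From HB Require Import structures.
From mathcomp Require Import all_boot all_order all_algebra all_fingroup.
From mathcomp Require Import zify ring.
Set Implicit Arguments.
Unset Strict Implicit.
Unset Printing Implicit Defensive.
Import Order.TTheory GRing.Theory Num.Theory.
Local Open Scope ring_scope.

(* Positivity of the fusion coefficients forces every deconfinement of a bare
   defect X^s_1 to be a single multilayer anyon u whose fusion along each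
   s-orbit is exactly the vacuum.  When r and s are disjoint, or r = (i j)
   with s i = i, every transposition of the cycle decomposition of r starts at
   a fixed point of the current partial product, so F(r, s) = 1; the layerwise
   products u_k v_k are simple (for r = (i j) because u_j is invertible with
   inverse u_i), and the fusion of u v along an orbit of r s is a product of
   orbit fusions of u and of v, hence the vacuum.  Part (2) follows by writing
   s = (i s(i)) p with p i = i and inducting on the number of points moved. *)

Lemma sumr_delta (R : pzSemiRingType) (I : finType) (G : I -> R) i0 :
  \sum_i (i == i0)%:R * G i = G i0.
Proof.
rewrite (bigD1 i0) //= eqxx mul1r big1 ?addr0 // => i /negbTE ->; exact: mul0r.
Qed.

Lemma sumr_eq1_ge0 (I : finType) (G : I -> int) :
  (forall i, 0 <= G i) -> \sum_i G i = 1 ->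
  exists i0, G i0 = 1 /\ forall i, i != i0 -> G i = 0.
Proof.
move=> G0 G1.
have [|i0 /andP [_ Gi0]] := @psumr_neq0P _ _ predT G (fun i _ => G0 i); first by rewrite G1.
exists i0; move: G1; rewrite (bigD1 i0) //=.
have rest0 : 0 <= \sum_(i | i != i0) G i by apply: sumr_ge0.
move: Gi0 rest0; set r := \sum_(i | _) _ => Gi0 rest0 G1.
have r0 : r = 0 by lia.
split; first by rewrite r0 addr0 in G1.
by move=> i ne; apply: (psumr_eq0P (fun i _ => G0 i) r0).
Qed.

Section FusionRing.
Variable F : fusion_rules.
Hypothesis ax : fusion_ring_axioms F.
Local Notation L := (lab F).
Local Notation N := (@Nf F).
Local Notation one := (lunit F).
Local Notation du := (@ldual F).
Local Notation cprod := (@Defs.cprod F).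
Local Notation cbasis := (@Defs.cbasis F).

Lemma NfC a b c : N a b c = N b a c. Proof. by case: ax. Qed.
Lemma NfA a b c d : (\sum_e N a b e * N e c d)%N = (\sum_e N b c e * N a e d)%N.
Proof. by case: ax => _ []. Qed.
Lemma Nf1l a b : N one a b = (a == b) :> nat. Proof. by case: ax => _ [] _ []. Qed.
Lemma ldualK a : du (du a) = a. Proof. by case: ax => _ [] _ [] _ []. Qed.
Lemma Nf_to1 a b : N a b one = (b == du a) :> nat.
Proof. by case: ax => _ [] _ [] _ [] _ []. Qed.
Lemma Nf_dual a b c : N a b c = N (du a) c b.
Proof. by case: ax => _ [] _ [] _ [] _ []. Qed.
Lemma Nf1r a b : N a one b = (a == b) :> nat. Proof. by rewrite NfC Nf1l. Qed.

Lemma cmulE (x y : celt F) c : cmul x y c = \sum_a \sum_b x a * y b * (N a b c)%:R.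
Proof. by rewrite ffunE. Qed.

Lemma cbasisE a c : cbasis a c = (c == a)%:R. Proof. by rewrite ffunE. Qed.

Lemma cmul_basisl a (y : celt F) c : cmul (cbasis a) y c = \sum_b y b * (N a b c)%:R.
Proof.
rewrite cmulE -(sumr_delta (fun a' => \sum_b y b * (N a' b c)%:R) a).
by apply: eq_bigr => a' _; rewrite cbasisE mulr_sumr; apply: eq_bigr => b _; rewrite mulrA.
Qed.

Lemma cmul_basis a b : cmul (cbasis a) (cbasis b) = [ffun c => (N a b c)%:R].
Proof.
apply/ffunP => c; rewrite cmul_basisl ffunE -(sumr_delta (fun b' => (N a b' c)%:R) b).
by apply: eq_bigr => b' _; rewrite cbasisE mulrC.
Qed.

Lemma cmulC (x y : celt F) : cmul x y = cmul y x.
Proof.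
apply/ffunP => c; rewrite !cmulE exchange_big; apply: eq_bigr => a _.
by apply: eq_bigr => b _; rewrite NfC [x b * _]mulrC.
Qed.

Lemma cmul1l (x : celt F) : cmul (cunit F) x = x.
Proof.
apply/ffunP => c; rewrite cmul_basisl -[RHS](sumr_delta x c).
by apply: eq_bigr => b _; rewrite Nf1l mulrC eq_sym.
Qed.

Lemma cmul1r (x : celt F) : cmul x (cunit F) = x.
Proof. by rewrite cmulC cmul1l. Qed.

Lemma cmul_cmulE (x y z : celt F) d : cmul (cmul x y) z d =
  \sum_a \sum_b \sum_c x a * y b * z c * (\sum_e N a b e * N e c d)%N%:R.
Proof.
rewrite cmulE (eq_bigr (fun e => \sum_c \sum_a \sum_b
    x a * y b * z c * (N a b e * N e c d)%N%:R)); last first.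
  move=> e _; apply: eq_bigr => c _; rewrite cmulE !mulr_suml; apply: eq_bigr => a _.
  by rewrite !mulr_suml; apply: eq_bigr => b _; rewrite natrM; ring.
rewrite exchange_big /=.
transitivity (\sum_c \sum_a \sum_b \sum_e x a * y b * z c * (N a b e * N e c d)%N%:R).
  apply: eq_bigr => c _; rewrite exchange_big; apply: eq_bigr => a _; exact: exchange_big.
rewrite exchange_big; apply: eq_bigr => a _; rewrite exchange_big; apply: eq_bigr => b _.
by apply: eq_bigr => c _; rewrite natr_sum mulr_sumr.
Qed.

Lemma cmulA (x y z : celt F) : cmul (cmul x y) z = cmul x (cmul y z).
Proof.
apply/ffunP => d; rewrite [in RHS]cmulC !cmul_cmulE exchange_big.
apply: eq_bigr => b _; rewrite exchange_big; apply: eq_bigr => c _.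
apply: eq_bigr => a _; rewrite NfA.
under eq_bigr => e _ do rewrite [N a e d]NfC.
ring.
Qed.

Lemma cmulCA (x y z : celt F) : cmul x (cmul y z) = cmul y (cmul x z).
Proof. by rewrite -cmulA (cmulC x) cmulA. Qed.

Lemma cprod_rem a s : a \in s -> cprod s = cmul (cbasis a) (cprod (rem a s)).
Proof.
elim: s => [//|b s IH] /=; rewrite inE; case: (eqVneq b a) => [->//|ne] /= ains.
by rewrite IH // cmulCA.
Qed.

Lemma cprod_perm s1 s2 : perm_eq s1 s2 -> cprod s1 = cprod s2.
Proof.
elim: s1 s2 => [|a s1 IH] s2 p12; first by move/perm_size: p12 => /esym/size0nil ->.
have ain : a \in s2 by rewrite -(perm_mem p12) mem_head.
rewrite (cprod_rem ain) /= (IH (rem a s2)) //.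
by rewrite -(perm_cons a) (perm_trans p12) // perm_to_rem.
Qed.

Lemma cprod_vac (s : seq L) : all (pred1 one) s -> cprod s = cunit F.
Proof. by elim: s => [//|a s IH] /= /andP [/eqP -> /IH ->]; rewrite cmul1l. Qed.

Lemma Nf_neq0 a b : exists c, (0 < N a b c)%N.
Proof.
have [c Hc|N0] := pickP (fun c => 0 < N a b c)%N; first by exists c.
have := NfA a b (du b) a; rewrite big1 => [|e _]; last first.
  by move/negbT: (N0 e); rewrite lt0n negbK => /eqP ->.
rewrite (bigD1 one) //= Nf_to1 eqxx Nf1r eqxx; lia.
Qed.

Lemma cmul_ge0 (x y : celt F) c :
  (forall a, 0 <= x a) -> (forall b, 0 <= y b) -> 0 <= cmul x y c.
Proof.
move=> x0 y0; rewrite cmulE; apply: sumr_ge0 => a _; apply: sumr_ge0 => b _.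
by rewrite !mulr_ge0 // ler0n.
Qed.

Lemma cprod_ge0 s c : 0 <= cprod s c.
Proof.
elim: s c => [|a s IH] c /=; first by rewrite cbasisE ler0n.
by apply: cmul_ge0 => // b; rewrite cbasisE ler0n.
Qed.

Lemma cprod_neq0 s : exists c, 0 < cprod s c.
Proof.
elim: s => [|a s [c0 Hc0]] /=; first by exists one; rewrite cbasisE eqxx.
have [c Hc] := Nf_neq0 a c0; exists c; rewrite cmul_basisl (bigD1 c0) //=.
apply: ltr_wpDr; first by apply: sumr_ge0 => b _; rewrite mulr_ge0 ?cprod_ge0 ?ler0n.
by rewrite mulr_gt0 // ltr0n.
Qed.

(* Associativity against the inverse [c'] gives [\sum_e N c x e ^ 2 = 1]. *)
Lemma cmul_invertible_simple c c' : cmul (cbasis c) (cbasis c') = cunit F ->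
  forall x, exists z, cmul (cbasis c) (cbasis x) = cbasis z.
Proof.
move=> /ffunP cc' x; have {}cc' e : N c c' e = (e == one) :> nat.
  by have := cc' e; rewrite cmul_basis !ffunE => /eqP; rewrite eqr_nat => /eqP.
have ec' : c' = du c by move: (cc' one); rewrite Nf_to1 eqxx; case: eqP.
have : (\sum_e N c x e * N c x e = 1)%N.
  have := NfA c' c x x; rewrite (bigD1 one) //= NfC cc' eqxx Nf1l eqxx big1 => [|e ne].
    move=> E; apply: esym (etrans E _); apply: eq_bigr => e _.
    by rewrite [N c' e x]Nf_dual ec' ldualK.
  by rewrite NfC cc' (negbTE ne).
move/eqP/sum_nat_eq1 => [z [_ z1 z0]]; exists z; apply/ffunP => e.
rewrite cmul_basis !ffunE; congr (_%:R).
case: (eqVneq e z) => [->|ne]; first by move: z1; clear; nia.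
by move: (z0 e ne isT); clear; nia.
Qed.

End FusionRing.

Section Orbits.
Variable T : finType.
Implicit Types (s p : {perm T}) (x y : T).

Lemma porbit_sub s x (A : {set T}) : x \in A -> {in A, forall y, s y \in A} ->
  porbit s x \subset A.
Proof.
move=> xA sA; apply/subsetP => _ /porbitP [i ->].
by elim: i => [|i IH]; rewrite ?expg0 ?perm1 // expgSr permM sA.
Qed.

Lemma porbit_eq s x y : y \in porbit s x -> porbit s y = porbit s x.
Proof. by move=> yx; apply/eqP; rewrite eq_porbit_mem. Qed.

Lemma porbit_step s x : porbit s (s x) = porbit s x.
Proof. by have := porbit_perm s 1 x; rewrite expg1. Qed.

Lemma mem_porbit_step s x y : y \in porbit s x -> s y \in porbit s x.
Proof. by move=> yx; rewrite -(porbit_eq yx) -(porbit_step s y) porbit_id. Qed.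

Lemma porbit_fix s x : s x = x -> porbit s x = [set x].
Proof.
move=> sx; apply/eqP; rewrite eqEsubset sub1set porbit_id andbT.
by apply: porbit_sub; rewrite ?inE // => y /set1P ->; rewrite sx inE.
Qed.

Lemma porbit_eq_on s p x : {in porbit s x, p =1 s} -> porbit p x = porbit s x.
Proof.
move=> ps; apply/eqP; rewrite eqEsubset; apply/andP; split.
  by apply: porbit_sub; rewrite ?porbit_id // => y yx; rewrite ps // mem_porbit_step.
have : porbit s x \subset porbit p x :&: porbit s x.
  apply: porbit_sub; first by rewrite inE !porbit_id.
  move=> y /setIP [yp ys]; rewrite inE mem_porbit_step // andbT -ps //.
  exact: mem_porbit_step.
by move/subset_trans; apply; apply: subsetIl.
Qed.

Lemma porbit_moved s x y : s x != x -> y \in porbit s x -> s y != y.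
Proof.
move=> sx; apply: contraTneq => sy.
by rewrite porbit_sym porbit_fix // inE; apply: contraNneq sx => ->; rewrite sy.
Qed.

Lemma mem_iter_porbit s x k : iter k s x \in porbit s x.
Proof. by rewrite -permX mem_porbit. Qed.

Lemma iter_porbit_inj s x a b : (a < #|porbit s x|)%N -> (b < #|porbit s x|)%N ->
  iter a s x = iter b s x -> a = b.
Proof.
move=> ha hb e; apply/eqP.
by rewrite -(nth_uniq x _ _ (uniq_traject_porbit s x)) ?size_traject ?nth_traject ?e.
Qed.

Lemma porbit_tperm x y : x != y -> porbit (tperm x y) x = [set x; y].
Proof.
move=> ne; apply/eqP; rewrite eqEsubset; apply/andP; split.
  apply: porbit_sub; first by rewrite !inE eqxx.
  by move=> z /set2P [->|->]; rewrite ?tpermL ?tpermR !inE eqxx ?orbT.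
apply/subsetP => z /set2P [->|->]; first exact: porbit_id.
by rewrite -{1}(tpermL x y) mem_porbit_step ?porbit_id.
Qed.

End Orbits.

Lemma prod_int_eq1 (I : finType) (P : pred I) (E : I -> int) :
  (forall i, P i -> 0 < E i) -> \prod_(i | P i) E i = 1 -> forall i, P i -> E i = 1.
Proof.
move=> E0 E1 i Pi; move: E1; rewrite (bigD1 i) //=.
have : 0 < \prod_(j | P j && (j != i)) E j by apply: prodr_gt0 => j /andP [/E0].
move: (E0 i Pi); move: (E i) (\prod_(j | _) _) => a b; nia.
Qed.

Lemma prod_eqb_ffun (I : finType) (T : eqType) (f g : {ffun I -> T}) :
  \prod_i ((f i == g i) : nat)%:R = ((f == g) : nat)%:R :> int.
Proof.
have [->|ne] := eqVneq f g; first by rewrite big1 // => i _; rewrite eqxx.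
have [i /negbTE fi] : exists i, f i != g i.
  apply/existsP; apply: contraR ne; rewrite negb_exists => /forallP fg.
  by apply/eqP/ffunP => i; move: (fg i); rewrite negbK => /eqP.
by rewrite (bigD1 i) //= fi mul0r.
Qed.

Section Confinement.
Variable F : fusion_rules.
Hypothesis ax : fusion_ring_axioms F.
Variable n : nat.
Local Notation N := (@Nf F).
Local Notation one := (lunit F).
Local Notation cprod := (@Defs.cprod F).
Local Notation mvec := (mvec F n).
Local Notation melt := (melt F n).
Local Notation vone := (vone F n).
Local Notation munit := (munit F n).
Implicit Types (s : {perm 'I_n}) (u v w : mvec) (X : melt).

Definition orbit_prod s v x := cprod [seq v k | k <- enum (porbit s x)].

Lemma exists_orbit_rep s k : exists2 r, orbit_rep s r & k \in porbit s r.
Proof.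
have [r rk rmin] := arg_minnP (fun j : 'I_n => nat_of_ord j) (porbit_id s k).
exists r; last by rewrite porbit_sym.
by apply/forall_inP => j; rewrite (porbit_eq rk) => /rmin.
Qed.

Lemma sfixed_porbit s w x y : sfixed s w -> y \in porbit s x -> w y = w x.
Proof.
move=> /forallP sw; have : porbit s x \subset [set y | w y == w x].
  by apply: porbit_sub => [|z]; rewrite !inE // => /eqP <-; apply: sw.
by move/subsetP/(_ y); rewrite inE => /[apply] /eqP.
Qed.

Lemma sfixed_vone s : sfixed s vone.
Proof. by apply/forallP => k; rewrite !ffunE. Qed.

Lemma sfixed_eq_reps s u w : sfixed s u -> sfixed s w ->
  (forall i, orbit_rep s i -> u i = w i) -> u = w.
Proof.
move=> su sw uw; apply/ffunP => k; have [r rr kr] := exists_orbit_rep s k.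
by rewrite (sfixed_porbit su kr) (sfixed_porbit sw kr) uw.
Qed.

Lemma sfixed_reps_vac s w :
  (sfixed s w)%:R * \prod_(i | orbit_rep s i) ((w i == one)%:R : int) = (w == vone)%:R.
Proof.
have [->|ne] := eqVneq w vone.
  by rewrite sfixed_vone big1 ?mulr1 // => i _; rewrite ffunE eqxx.
case sw: (sfixed s w); last by rewrite mul0r.
have [k wk] : exists k, w k != one.
  apply/existsP; apply: contraR ne; rewrite negb_exists => /forallP w1.
  by apply/eqP/ffunP => k; rewrite ffunE; move: (w1 k); rewrite negbK => /eqP.
have [r rr kr] := exists_orbit_rep s k.
by rewrite (bigD1 r) //= -(sfixed_porbit sw kr) (negbTE wk) mul0r mulr0.
Qed.

Lemma mbasisE v w : mbasis v w = (w == v)%:R :> int. Proof. by rewrite ffunE. Qed.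

Lemma conf_basisE s v w : conf_basis s v w =
  (sfixed s w)%:R * \prod_(i | orbit_rep s i) orbit_prod s v i (w i).
Proof. by rewrite ffunE. Qed.

Lemma conf_basis_vac s v : (forall k, orbit_prod s v k = cunit F) ->
  conf_basis s v = munit.
Proof.
move=> vac; apply/ffunP => w; rewrite conf_basisE mbasisE -(sfixed_reps_vac s).
by congr (_ * _); apply: eq_bigr => i _; rewrite vac cbasisE.
Qed.

Lemma confine_basis s v : confine s (mbasis v) = conf_basis s v.
Proof.
apply/ffunP => w; rewrite ffunE -(sumr_delta (fun u => conf_basis s u w) v).
by apply: eq_bigr => u _; rewrite mbasisE.
Qed.

Lemma orbit_prod_eq s v x y : y \in porbit s x -> orbit_prod s v y = orbit_prod s v x.
Proof. by move=> yx; rewrite /orbit_prod (porbit_eq yx). Qed.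

Lemma orbit_prod_ge0 s v x c : 0 <= orbit_prod s v x c.
Proof. exact: cprod_ge0. Qed.

Definition orbit_label s v x := odflt one [pick c | 0 < orbit_prod s v x c].

Lemma orbit_label_gt0 s v x : 0 < orbit_prod s v x (orbit_label s v x).
Proof.
rewrite /orbit_label; case: pickP => [c //|none].
by have [c] := cprod_neq0 ax [seq v k | k <- enum (porbit s x)]; move: (none c) => /= ->.
Qed.

Lemma orbit_label_step s v x : orbit_label s v (s x) = orbit_label s v x.
Proof. by rewrite /orbit_label /orbit_prod porbit_step. Qed.

Lemma conf_basis_ge0 s v w : 0 <= conf_basis s v w.
Proof.
by rewrite conf_basisE mulr_ge0 ?ler0n // prodr_ge0 // => i _; apply: orbit_prod_ge0.
Qed.

Lemma conf_basis_neq0 s v : exists w, 0 < conf_basis s v w.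
Proof.
pose w : mvec := [ffun x => orbit_label s v x].
have sw : sfixed s w by apply/forallP => x; rewrite !ffunE orbit_label_step.
exists w; rewrite conf_basisE sw mul1r; apply: prodr_gt0 => i _.
by rewrite ffunE orbit_label_gt0.
Qed.

Lemma conf_basis_vac_off s v k c : conf_basis s v = munit -> c != one ->
  orbit_prod s v k c = 0.
Proof.
move=> vac nc.
pose w : mvec := [ffun x => if x \in porbit s k then c else orbit_label s v x].
have sw : sfixed s w.
  apply/forallP => x; rewrite !ffunE porbit_sym porbit_step porbit_sym.
  by case: ifP => // _; rewrite orbit_label_step.
have wn1 : (w == vone) = false.
  by apply: contraNF nc => /eqP/ffunP/(_ k); rewrite !ffunE porbit_id => ->.
have /eqP := congr1 (fun f : melt => f w) vac; rewrite /= conf_basisE mbasisE sw wn1 mul1r.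
case/prodf_eq0 => i _; rewrite ffunE; case: ifP => [ik /eqP|_ /eqP w0].
  by rewrite (orbit_prod_eq _ ik).
by move: (orbit_label_gt0 s v i); rewrite w0 ltxx.
Qed.

Lemma conf_basis_vac_orbit s v : conf_basis s v = munit ->
  forall k, orbit_prod s v k = cunit F.
Proof.
move=> vac.
have pos1 x : 0 < orbit_prod s v x one.
  have [c] : exists c, 0 < orbit_prod s v x c by apply: cprod_neq0.
  by have [->|nc] := eqVneq c one; rewrite // conf_basis_vac_off.
have /prod_int_eq1 eq1 : \prod_(i | orbit_rep s i) orbit_prod s v i one = 1.
  transitivity (conf_basis s v vone); last by rewrite vac mbasisE eqxx.
  by rewrite conf_basisE sfixed_vone mul1r; apply: eq_bigr => i _; rewrite ffunE.
move=> k; apply/ffunP => c; have [r rr kr] := exists_orbit_rep s k.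
rewrite (orbit_prod_eq _ kr) cbasisE; have [->|nc] := eqVneq c one.
  by rewrite eq1.
by rewrite conf_basis_vac_off.
Qed.

Lemma rmul_munit s X : (forall w, ~~ sfixed s w -> X w = 0) -> rmul s X munit = X.
Proof.
move=> X0; apply/ffunP => w; rewrite ffunE.
have E u : \sum_v X u * munit v * \prod_(i | orbit_rep s i) (N (u i) (v i) (w i))%:R
    = X u * \prod_(i | orbit_rep s i) ((u i == w i) : nat)%:R.
  rewrite (eq_bigr (fun v => (v == vone)%:R *
      (X u * \prod_(i | orbit_rep s i) (N (u i) (v i) (w i))%:R))) => [|v _].
    by rewrite sumr_delta; congr (_ * _); apply: eq_bigr => i _; rewrite ffunE Nf1r.
  by rewrite mbasisE; ring.
under eq_bigr do rewrite E.
case sw: (sfixed s w); last by rewrite mul0r X0 ?sw.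
rewrite mul1r (bigD1 w) //= [X in _ + X]big1 => [|u uw].
  by rewrite addr0 big1 ?mulr1 // => i _; rewrite eqxx.
case su: (sfixed s u); last by rewrite X0 ?su ?mul0r.
have [i ri ni] : exists2 i, orbit_rep s i & u i != w i.
  apply/exists_inP; apply: contraR uw; rewrite negb_exists_in => /forall_inP uw.
  by apply/eqP; apply: (sfixed_eq_reps su sw) => i /uw; rewrite negbK => /eqP.
by rewrite (bigD1 i) //= (negbTE ni) mul0r mulr0.
Qed.

Lemma act_munit s X : Defs.act s X munit = confine s X.
Proof.
rewrite /Defs.act rmul_munit // => w nw.
by rewrite ffunE big1 // => v _; rewrite conf_basisE (negbTE nw) mul0r mulr0.
Qed.

(* By positivity, a single term of [confine s d vone = 1] survives. *)
Lemma deconf_bare s d : is_deconf s munit d ->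
  exists u, d = mbasis u /\ forall k, orbit_prod s u k = cunit F.
Proof.
rewrite /is_deconf act_munit => -[d0 dconf].
have term0 v w : 0 <= d v * conf_basis s v w by rewrite mulr_ge0 ?conf_basis_ge0.
have sum_d w : \sum_v d v * conf_basis s v w = munit w by rewrite -dconf ffunE.
have [|u [du1 du0]] := sumr_eq1_ge0 (term0^~ vone).
  by have := sum_d vone; rewrite mbasisE eqxx.
have off_vone v w : w != vone -> d v * conf_basis s v w = 0.
  move=> wn1; have := sum_d w; rewrite mbasisE (negbTE wn1).
  by move/(psumr_eq0P (fun v _ => term0 v w)); apply.
have ed : d = mbasis u.
  apply/ffunP => v; rewrite mbasisE; have [->|vu] := eqVneq v u; rewrite /=.
    move/eqP: du1; rewrite natr_mul_eq1 ?Znat_def ?conf_basis_ge0 //.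
    by case/andP => /eqP.
  have [w pos] := conf_basis_neq0 s v.
  have : d v * conf_basis s v w = 0.
    by have [->|wn1] := eqVneq w vone; [apply: du0 | apply: off_vone].
  by move: pos (d0 v); move: (d v) (conf_basis s v w) => a b; nia.
exists u; split => //; apply: conf_basis_vac_orbit.
by rewrite -confine_basis -ed.
Qed.

Lemma deconf_bare_munit s : is_deconf s munit munit.
Proof.
split=> [v|]; first by rewrite mbasisE ler0n.
rewrite act_munit confine_basis; apply: conf_basis_vac => k.
by apply: (cprod_vac ax); apply/allP => _ /mapP [y _ ->]; rewrite /= ffunE.
Qed.

Lemma mmul_basis u v w : (forall k, cmul (cbasis (u k)) (cbasis (v k)) = cbasis (w k)) ->
  mmul (mbasis u) (mbasis v) = mbasis w.
Proof.
move=> uvw; apply/ffunP => z; rewrite ffunE.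
rewrite (eq_bigr (fun a => (a == u)%:R *
    \sum_b mbasis v b * \prod_k (N (a k) (b k) (z k))%:R)) => [|a _]; last first.
  by rewrite mbasisE mulr_sumr; apply: eq_bigr => b _; rewrite mulrA.
rewrite sumr_delta (eq_bigr (fun b => (b == v)%:R * \prod_k (N (u k) (b k) (z k))%:R)).
  rewrite sumr_delta mbasisE -prod_eqb_ffun; apply: eq_bigr => k _.
  by have := congr1 (fun f : celt F => f (z k)) (uvw k); rewrite cmul_basis !ffunE => ->.
by move=> b _; rewrite mbasisE.
Qed.

Lemma act_fused s u v w :
  (forall k, cmul (cbasis (u k)) (cbasis (v k)) = cbasis (w k)) ->
  (forall k, orbit_prod s w k = cunit F) ->
  Defs.act s (mmul (mmul (mbasis u) (mbasis v)) munit) munit = munit.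
Proof.
move=> uvw vac; rewrite (mmul_basis uvw) (@mmul_basis w vone w) => [|k].
  by rewrite act_munit confine_basis conf_basis_vac.
by rewrite ffunE cmul1r.
Qed.

End Confinement.

Section TrivialFfac.
Variables (F : fusion_rules) (n : nat).
Implicit Types (r s : {perm 'I_n}) (ts : seq ('I_n * 'I_n)).

Definition pair_support ts := flatten [seq [:: t.1; t.2] | t <- ts].

(* The first point of each transposition is then fixed by the partial product
   [pi_(k+1)], so the factor F is trivial. *)
Fixpoint heads_fixed s ts : Prop :=
  if ts is t :: ts' then
    [/\ t.1 != t.2, s t.1 = t.1, t.1 \notin pair_support ts' & heads_fixed s ts']
  else True.

Lemma pair_support_cat ts1 ts2 :
  pair_support (ts1 ++ ts2) = pair_support ts1 ++ pair_support ts2.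
Proof. by rewrite /pair_support map_cat flatten_cat. Qed.

Lemma Fstep_fixed ts s a : s a = a -> a \notin pair_support ts ->
  (foldr (@Fstep F n) (s, munit F n) ts).1 a = a.
Proof.
move=> sa; elim: ts => [//|t ts IH]; rewrite /pair_support /= !inE !negb_or.
by case/and3P => ta1 ta2 /IH; rewrite /rlcomp permM => ->; rewrite tpermD // eq_sym.
Qed.

Lemma Ffac_heads_fixed ts s : heads_fixed s ts -> Ffac F ts s = munit F n.
Proof.
rewrite /Ffac; elim: ts => [//|t ts IH] /= [t12 st1 t1ts /IH].
by rewrite (porbit_fix (Fstep_fixed st1 t1ts)) inE eq_sym (negbTE t12).
Qed.

Lemma heads_fixed_cat s ts1 ts2 : heads_fixed s ts1 -> heads_fixed s ts2 ->
  {in pair_support ts1, forall x, x \notin pair_support ts2} ->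
  heads_fixed s (ts1 ++ ts2).
Proof.
elim: ts1 => [//|t ts1 IH] /= [t12 st1 t1ts1 hf1] hf2 dis; split=> //.
  by rewrite pair_support_cat mem_cat negb_or t1ts1 dis // mem_head.
by apply: IH => // x x1; rewrite dis // !inE x1 !orbT.
Qed.

Lemma mem_chain_support r i x j m :
  x \in pair_support [seq (iter k r i, iter k.+1 r i) | k <- iota j m] ->
  exists2 k, (j <= k <= j + m)%N & x = iter k r i.
Proof.
case/flattenP => _ /mapP [_ /mapP [k + ->] ->]; rewrite mem_iota !inE => /andP [jk km].
by case/orP => /eqP ->; [exists k | exists k.+1]; rewrite ?jk ?(ltnW km) ?leqW.
Qed.

Lemma heads_fixed_chain r s i : disjoint_perms r s -> heads_fixed s (chain r i).
Proof.
move=> dis; rewrite /chain.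
have ltl : (0 < #|porbit r i|)%N by rewrite lt0n card_porbit_neq0.
suff : forall m j, (j + m <= #|porbit r i|.-1)%N ->
  heads_fixed s [seq (iter k r i, iter k.+1 r i) | k <- iota j m] by apply.
elim=> [//|m IH] j jm /=.
have inj a b : (a <= j + m.+1)%N -> (b <= j + m.+1)%N -> iter a r i = iter b r i -> a = b.
  by move=> ha hb; apply: iter_porbit_inj; move: ltl; clear -ha hb jm; lia.
have moved : iter j r i != iter j.+1 r i.
  by apply/eqP => /inj; rewrite addnS; lia.
split=> //; last by apply: IH; rewrite addSnnS.
  by case: (dis (iter j r i)) => // rfix; move: moved; rewrite /= rfix eqxx.
apply/negP => /mem_chain_support [k /andP [jk km] /inj].
by rewrite addnS; lia.
Qed.

Lemma mem_chains_support r st x :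
  x \in pair_support (flatten [seq chain r y | y <- st]) ->
  exists2 y, y \in st & x \in porbit r y.
Proof.
elim: st => [//|y st IH] /=; rewrite pair_support_cat mem_cat => /orP [|/IH [y' y'st xy']].
  by case/mem_chain_support => k _ ->; exists y; rewrite ?mem_head ?mem_iter_porbit.
by exists y'; rewrite // inE y'st orbT.
Qed.

Lemma heads_fixed_chains r s st : disjoint_perms r s -> uniq (map (porbit r) st) ->
  heads_fixed s (flatten [seq chain r y | y <- st]).
Proof.
move=> dis; elim: st => [//|y st IH] /= /andP [yst ust].
apply: heads_fixed_cat; [exact: heads_fixed_chain | exact: IH |].
move=> _ /mem_chain_support [k _ ->]; apply/negP => /mem_chains_support [y' y'st xy'].
by move: yst; rewrite -(porbit_eq (mem_iter_porbit r y k)) (porbit_eq xy') map_f.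
Qed.

End TrivialFfac.

Section CycleDecomposition.
Variable n : nat.
Implicit Types (r s : {perm 'I_n}) (ts : seq ('I_n * 'I_n)).

Lemma cycle_decomp_exists r : exists ts, cycle_decomp r ts.
Proof.
pose pick_pt (O : {set 'I_n}) := [pick y | y \in O].
pose cycles := [seq O <- enum (porbits r) | (1 < #|pred_of_set O|)%N].
have reps (l : seq {set 'I_n}) : {subset l <= porbits r} ->
    map (porbit r) (pmap pick_pt l) = l.
  elim: l => [//|O l IH] lr /=; have /imsetP [x _ ->] := lr O (mem_head _ _).
  rewrite /pick_pt; case: pickP => [y yx|/(_ x)]; last by rewrite porbit_id.
  by rewrite /= IH ?(porbit_eq yx) // => O' O'l; apply: lr; rewrite inE O'l orbT.
exists (flatten [seq chain r i | i <- pmap pick_pt cycles]), (pmap pick_pt cycles).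
by split=> //; rewrite reps // => O; rewrite mem_filter mem_enum => /andP [].
Qed.

Lemma cycle_decomp_chains r ts : cycle_decomp r ts -> exists st,
  [/\ uniq (map (porbit r) st), {in st, forall x, r x != x} &
      ts = flatten [seq chain r x | x <- st]].
Proof.
case=> st [pst ->]; exists st; split=> //.
  by rewrite (perm_uniq pst) filter_uniq // enum_uniq.
move=> x xst; have : porbit r x \in [seq O <- enum (porbits r) | (1 < #|pred_of_set O|)%N].
  by rewrite -(perm_mem pst) map_f.
by rewrite mem_filter; apply: contraTneq => /porbit_fix ->; rewrite cards1.
Qed.

Lemma cycle_decomp_tperm i j ts : i != j -> cycle_decomp (tperm i j) ts ->
  [\/ ts = [::], ts = [:: (i, j)] | ts = [:: (j, i)]].
Proof.
move=> ij /cycle_decomp_chains [st [ust moved ->]].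
have Oi := porbit_tperm ij.
have Oj : porbit (tperm i j) j = [set i; j] by rewrite (@porbit_eq _ _ i) // Oi !inE eqxx orbT.
have ij_st x : x \in st -> x = i \/ x = j.
  move/moved; have [->|xi] := eqVneq x i; first by left.
  by have [->|xj] := eqVneq x j; [right | rewrite tpermD 1?eq_sym // eqxx].
have chain_st x : x \in st -> chain (tperm i j) x = [:: (x, tperm i j x)].
  by case/ij_st => ->; rewrite /chain ?Oi ?Oj cards2 ij.
case: st ust ij_st chain_st {moved} => [|x [|y st]] /= ust ij_st chain_st.
- by constructor 1.
- rewrite chain_st ?mem_head // cats0.
  case: (ij_st x (mem_head _ _)) => ->; first by constructor 2; rewrite tpermL.
  by constructor 3; rewrite tpermR.
- move: ust; rewrite inE; have yst : y \in [:: x, y & st] by rewrite !inE eqxx orbT.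
  by case: (ij_st x (mem_head _ _)) => ->; case: (ij_st y yst) => ->; rewrite ?Oi ?Oj eqxx.
Qed.

Lemma disjoint_permsC r s : disjoint_perms r s -> disjoint_perms s r.
Proof. by move=> dis k; case: (dis k); [right | left]. Qed.

Lemma disjoint_porbit_fixed r s k y : disjoint_perms r s -> r k = k ->
  y \in porbit s k -> r y = y.
Proof.
move=> dis rk yk; have [sk|sk] := eqVneq (s k) k.
  by move: yk; rewrite porbit_fix // => /set1P ->.
by case: (dis y) => // /eqP; rewrite (negbTE (porbit_moved sk yk)).
Qed.

Lemma rlcomp_disjC r s : disjoint_perms r s -> rlcomp r s = rlcomp s r.
Proof.
move=> dis; apply/permP => x; rewrite /rlcomp !permM.
have [rx|rx] := eqVneq (r x) x.
  by rewrite rx (disjoint_porbit_fixed dis rx (mem_porbit_step (porbit_id s x))).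
have sx : s x = x by case: (dis x) => // /eqP; rewrite (negbTE rx).
have := mem_porbit_step (porbit_id r x).
by rewrite sx => /(disjoint_porbit_fixed (disjoint_permsC dis) sx) ->.
Qed.

Lemma porbit_rlcomp_tperm (p : {perm 'I_n}) i j : p i = i -> i != j ->
  porbit (rlcomp (tperm i j) p) i = i |: porbit p j.
Proof.
move=> pi ij; set q := rlcomp (tperm i j) p.
have qE y : q y = tperm i j (p y) by rewrite /q /rlcomp permM.
have iOj : i \notin porbit p j by rewrite porbit_sym porbit_fix // inE eq_sym.
have q_pOj y : y \in porbit p j -> p y != j -> q y = p y.
  move=> yj pyj; have pyi : p y != i.
    by apply: contraNneq iOj => <-; apply: mem_porbit_step.
  by rewrite qE tpermD // eq_sym.
apply/eqP; rewrite eqEsubset; apply/andP; split.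
  apply: porbit_sub; first by rewrite setU11.
  move=> y /setU1P [->|yj]; first by rewrite qE pi tpermL setU1r ?porbit_id.
  have [pyj|pyj] := eqVneq (p y) j; first by rewrite qE pyj tpermR setU11.
  by rewrite q_pOj // setU1r ?mem_porbit_step.
have jOi : j \in porbit q i.
  have <- : q i = j by rewrite qE pi tpermL.
  by rewrite mem_porbit_step ?porbit_id.
rewrite subUset sub1set porbit_id -(porbit_eq jOi) /=.
have : porbit p j \subset porbit p j :&: porbit q j.
  apply: porbit_sub; first by rewrite inE !porbit_id.
  move=> y /setIP [yp yq]; rewrite inE mem_porbit_step //=.
  have [->|pyj] := eqVneq (p y) j; first exact: porbit_id.
  by rewrite -q_pOj // mem_porbit_step.
by move/subset_trans; apply; apply: subsetIr.
Qed.

End CycleDecomposition.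

Section BareFusion.
Variable F : fusion_rules.
Hypothesis ax : fusion_ring_axioms F.
Variable n : nat.
Local Notation one := (lunit F).
Local Notation cbasis := (@Defs.cbasis F).
Local Notation mvec := (mvec F n).
Local Notation munit := (munit F n).
Local Notation orbit_prod := (@orbit_prod F n).
Implicit Types (r s p : {perm 'I_n}) (u v : mvec).

Lemma orbit_prod_fixed s v k : s k = k -> orbit_prod s v k = cunit F -> v k = one.
Proof.
move=> sk; rewrite /orbit_prod porbit_fix // enum_set1 /= cmul1r // => /ffunP/(_ (v k)).
by rewrite !cbasisE eqxx; case: eqP.
Qed.

Lemma fuses_to_bare r s :
  (forall u v ts, (forall k, orbit_prod r u k = cunit F) ->
     (forall k, orbit_prod s v k = cunit F) -> cycle_decomp r ts ->
     Defs.act (rlcomp r s) (mmul (mmul (mbasis u) (mbasis v)) (Ffac F ts s)) munit = munit) ->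
  fuses_to (bare F r) (bare F s) (bare F (rlcomp r s)).
Proof.
move=> fused; split.
  have [ts cd] := cycle_decomp_exists r.
  by eexists; exists munit, munit, ts; split; last split; try exact: deconf_bare_munit.
move=> z [dx [dy [ts [/(deconf_bare ax) [u [-> u_vac]]]]]].
by case=> /(deconf_bare ax) [v [-> v_vac]] [cd ->]; rewrite /bare fused.
Qed.

Section DisjointFusion.
Variables (r s : {perm 'I_n}) (u v : mvec).
Hypothesis dis : disjoint_perms r s.
Hypotheses (u_vac : forall k, orbit_prod r u k = cunit F)
           (v_vac : forall k, orbit_prod s v k = cunit F).

Definition disjoint_fused : mvec := [ffun k => if r k == k then v k else u k].

Lemma disjoint_fused_layers k :
  cmul (cbasis (u k)) (cbasis (v k)) = cbasis (disjoint_fused k).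
Proof.
rewrite ffunE; have [rk|rk] := eqVneq (r k) k.
  by rewrite (orbit_prod_fixed rk (u_vac k)) cmul1l.
have sk : s k = k by case: (dis k) => // /eqP; rewrite (negbTE rk).
by rewrite (orbit_prod_fixed sk (v_vac k)) cmul1r.
Qed.

Lemma disjoint_fused_vac k : orbit_prod (rlcomp r s) disjoint_fused k = cunit F.
Proof.
rewrite /orbit_prod; have [rk|rk] := eqVneq (r k) k.
  have -> : porbit (rlcomp r s) k = porbit s k.
    apply: porbit_eq_on => y yk; rewrite /rlcomp permM.
    by rewrite (disjoint_porbit_fixed dis rk (mem_porbit_step yk)).
  rewrite -(v_vac k); congr (Defs.cprod _); apply/eq_in_map => y; rewrite mem_enum => yk.
  by rewrite ffunE (disjoint_porbit_fixed dis rk yk) eqxx.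
have moved y : y \in porbit r k -> r y != y by apply: porbit_moved.
have -> : porbit (rlcomp r s) k = porbit r k.
  apply: porbit_eq_on => y yk; rewrite /rlcomp permM.
  by case: (dis y) => [/eqP|->//]; rewrite (negbTE (moved y yk)).
rewrite -(u_vac k); congr (Defs.cprod _); apply/eq_in_map => y; rewrite mem_enum => yk.
by rewrite ffunE (negbTE (moved y yk)).
Qed.

End DisjointFusion.

Lemma fuses_disjoint r s : disjoint_perms r s ->
  fuses_to (bare F r) (bare F s) (bare F (rlcomp r s)).
Proof.
move=> dis; apply: fuses_to_bare => u v ts u_vac v_vac /cycle_decomp_chains [st [ust _ ->]].
rewrite Ffac_heads_fixed; last exact: heads_fixed_chains.
exact: act_fused (disjoint_fused_layers dis u_vac v_vac) (disjoint_fused_vac dis u_vac v_vac).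
Qed.

Lemma Ffac_tperm ts p i j : p i = i -> i != j -> cycle_decomp (tperm i j) ts ->
  Ffac F ts p = munit.
Proof.
move=> pi ij /(cycle_decomp_tperm ij) [] -> //=; rewrite /Ffac /=.
  by rewrite porbit_fix // inE eq_sym (negbTE ij).
by rewrite porbit_sym porbit_fix // inE eq_sym (negbTE ij).
Qed.

Section TpermFusion.
Variables (i j : 'I_n) (p : {perm 'I_n}) (u v : mvec) (zj : lab F).
Hypotheses (pi : p i = i) (ij : i != j).
Hypotheses (u_vac : forall k, orbit_prod (tperm i j) u k = cunit F)
           (v_vac : forall k, orbit_prod p v k = cunit F).

Lemma tperm_vac_off k : k != i -> k != j -> u k = one.
Proof. by move=> ki kj; apply: (orbit_prod_fixed _ (u_vac k)); rewrite tpermD // eq_sym. Qed.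

Lemma tperm_vac_pair : cmul (cbasis (u i)) (cbasis (u j)) = cunit F.
Proof.
have pij : perm_eq (enum [set i; j]) [:: i; j].
  by apply: uniq_perm; rewrite ?enum_uniq //= ?inE ?ij // => x; rewrite mem_enum !inE.
by rewrite -(u_vac i) /orbit_prod porbit_tperm // (cprod_perm ax (perm_map u pij)) /= cmul1r.
Qed.

Hypothesis uvj : cmul (cbasis (u j)) (cbasis (v j)) = cbasis zj.

Definition tperm_fused : mvec :=
  [ffun k => if k == i then u i else if k == j then zj else v k].

Lemma tperm_fused_layers k : cmul (cbasis (u k)) (cbasis (v k)) = cbasis (tperm_fused k).
Proof.
rewrite ffunE; have [->|ki] := eqVneq k i.
  by rewrite (orbit_prod_fixed pi (v_vac i)) cmul1r.
by have [->//|kj] := eqVneq k j; rewrite tperm_vac_off // cmul1l.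
Qed.

Lemma tperm_fused_vac_merged : orbit_prod (rlcomp (tperm i j) p) tperm_fused i = cunit F.
Proof.
have iOj : i \notin porbit p j by rewrite porbit_sym porbit_fix // inE eq_sym.
set R := rem j (enum (porbit p j)).
have pj : perm_eq (enum (porbit p j)) (j :: R) by rewrite perm_to_rem ?mem_enum ?porbit_id.
have pij : perm_eq (enum (i |: porbit p j)) (i :: j :: R).
  apply: perm_trans (_ : perm_eq _ (i :: enum (porbit p j))) _; last by rewrite perm_cons.
  apply: uniq_perm; rewrite /= ?mem_enum ?iOj ?enum_uniq // => x.
  by rewrite mem_enum !inE mem_enum.
have zR : map tperm_fused R = map v R.
  apply/eq_in_map => x xR; rewrite ffunE.
  have xj : x != j by move: xR; rewrite mem_rem_uniq ?enum_uniq // inE => /andP [].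
  have xi : x != i by apply: contraNneq iOj => <-; rewrite -mem_enum (mem_rem xR).
  by rewrite (negbTE xi) (negbTE xj).
rewrite /orbit_prod porbit_rlcomp_tperm // (cprod_perm ax (perm_map _ pij)) /= zR !ffunE.
rewrite eqxx eq_sym (negbTE ij) eqxx -uvj (cmulA ax) -(cmulA ax) tperm_vac_pair (cmul1l ax).
by rewrite -(v_vac j) /orbit_prod (cprod_perm ax (perm_map v pj)).
Qed.

Lemma tperm_fused_vac k : orbit_prod (rlcomp (tperm i j) p) tperm_fused k = cunit F.
Proof.
have [kO|kO] := boolP (k \in i |: porbit p j).
  rewrite -porbit_rlcomp_tperm // in kO.
  by rewrite (orbit_prod_eq _ kO) tperm_fused_vac_merged.
have off y : y \in porbit p k -> (y != i) && (y != j).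
  move=> yk; apply/andP; split; apply: contraNneq kO => yij; last first.
    by rewrite setU1r // porbit_sym -yij.
  by move: yk; rewrite yij porbit_sym porbit_fix // => /set1P ->; rewrite setU11.
rewrite /orbit_prod; have -> : porbit (rlcomp (tperm i j) p) k = porbit p k.
  apply: porbit_eq_on => y yk; rewrite /rlcomp permM.
  by case/andP: (off _ (mem_porbit_step yk)) => yi yj; rewrite tpermD // eq_sym.
rewrite -(v_vac k); congr (Defs.cprod _); apply/eq_in_map => y.
by rewrite mem_enum => /off /andP [yi yj]; rewrite ffunE (negbTE yi) (negbTE yj).
Qed.

End TpermFusion.

Lemma fuses_tperm p i j : p i = i -> i != j ->
  fuses_to (bare F (tperm i j)) (bare F p) (bare F (rlcomp (tperm i j) p)).
Proof.
move=> pi ij; apply: fuses_to_bare => u v ts u_vac v_vac cd.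
rewrite (Ffac_tperm pi ij cd).
have [zj uvj] : exists zj, cmul (cbasis (u j)) (cbasis (v j)) = cbasis zj.
  by apply: (cmul_invertible_simple ax (c' := u i)); rewrite cmulC // tperm_vac_pair.
exact: act_fused (tperm_fused_layers pi u_vac v_vac uvj)
  (tperm_fused_vac pi ij u_vac v_vac uvj).
Qed.

End BareFusion.

Lemma rlcomp_tperm_peel n (s : {perm 'I_n}) i : s i != i ->
  let p := (s * tperm i (s i))%g in
  [/\ p i = i, s = rlcomp (tperm i (s i)) p &
      (#|[set x | p x != x]| < #|[set x | s x != x]|)%N].
Proof.
move=> si p; split; first by rewrite permM tpermR.
  by rewrite /rlcomp /p -mulgA tperm2 mulg1.
apply: proper_card; apply/properP; split.
  2: by exists i; rewrite !inE ?si // permM tpermR eqxx.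
apply/subsetP => x; rewrite !inE; apply: contra => /eqP sx.
have xi : i != x by apply: contraNneq si => ->; rewrite sx.
have xsi : s i != x.
  apply: contraNneq si => six; have ix : i = x by apply: (@perm_inj _ s); rewrite six sx.
  by rewrite six ix.
by rewrite permM sx tpermD.
Qed.

Lemma bare_tperm_decomposition (F : fusion_rules) n (s : {perm 'I_n}) :
  fusion_ring_axioms F -> exists ts : seq {perm 'I_n},
    [/\ forall t, t \in ts -> is_transposition t, s = perm_seqprod ts &
        nested ts (bare F s)].
Proof.
move=> ax; have [m] := ubnP #|[set x | s x != x]|; elim: m s => // m IH s moved_s.
have [i si|fixed] := pickP (fun x => s x != x); last first.
  have -> : s = 1%g by apply/permP => x; rewrite perm1; move/negbFE/eqP: (fixed x).
  by exists [::].
have [pi es moved_p] := rlcomp_tperm_peel si.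
have [ts [tr ep nest]] := IH _ (leq_trans moved_p moved_s).
exists (tperm i (s i) :: ts); split=> [t|/=|].
- by case/predU1P => [->|/tr //]; exists i, (s i); rewrite eq_sym.
- by rewrite -ep.
- move: nest ep; case: ts {tr} => [|t ts] /= nest ep.
    by rewrite {1}es ep /rlcomp mul1g.
  exists (bare F (s * tperm i (s i))%g); split=> //.
  by rewrite [in bare F s]es; apply: fuses_tperm; rewrite // eq_sym.
Qed.

Theorem proposition4p17 (F : fusion_rules) (n : nat) :
  fusion_ring_axioms F -> (2 <= n)%N ->
  (forall r s : {perm 'I_n}, disjoint_perms r s ->
     fuses_to (bare F r) (bare F s) (bare F (rlcomp r s)) /\
     fuses_to (bare F s) (bare F r) (bare F (rlcomp r s)))
  /\
  (forall s : {perm 'I_n}, exists ts : seq {perm 'I_n},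
     (forall t, t \in ts -> is_transposition t) /\
     s = perm_seqprod ts /\ nested ts (bare F s)).
Proof.
move=> ax _; split=> [r s dis | s].
  split; first exact: fuses_disjoint.
  by rewrite rlcomp_disjC //; apply: fuses_disjoint (disjoint_permsC dis).
by have [ts [tr ep nest]] := bare_tperm_decomposition s ax; exists ts.
Qed.
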